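(* Let $W$ be a Coxeter group and $u\le v$ in $W$. If $s \in D_L(v)\setminus D_L(u)$, then the left multiplication map $x\mapsto sx$ maps $[u,v]$ to itself and restricts to a graph automorphism of $\Gamma(u,v)$. Similarly, if $s\in D_R(v)\setminus D_R(u)$, then right multiplication $x\mapsto xs$ restricts to a graph automorphism of $\Gamma(u,v)$.
   Context: $(W,S)$ is a Coxeter system with reflections $T$ (conjugates of $S$), length $\ell$ and Bruhat order $\le$ (transitive closure of $x<xt$, $t\in T$, $\ell(xt)>\ell(x)$). $D_L(w)=\{s\in S:\ell(sw)<\ell(w)\}$ and $D_R(w)=\{s\in S:\ell(ws)<\ell(w)\}$. $\Gamma(u,v)$ is the simple undirected graph on $[u,v]=\{x:u\le x\le v\}$ with edges $\{x,y\}$ whenever $y=xt$ for some $t\in T$. *)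

From HB Require Import structures.
From mathcomp Require Import all_boot monoid.
From Stdlib Require Import Relations ClassicalEpsilon.

Set Implicit Arguments.
Unset Strict Implicit.
Unset Printing Implicit Defensive.

Local Open Scope group_scope.

Section Coxeter.
Variable W : groupType.
Variable S : W -> Prop.

Definition word_prod (ws : seq W) : W := foldr (fun a b => a * b) 1 ws.

Definition is_word (ws : seq W) : Prop := forall x, x \in ws -> S x.

Definition is_order (G : groupType) (x : G) (n : nat) : Prop :=
  0 < n /\ x ^+ n = 1 /\ forall k, 0 < k -> x ^+ k = 1 -> n <= k.

(* (W,S) is a Coxeter system (Bourbaki): S consists of elements of order 2,
   S generates W, and W is presented by the generators S with relations
   (s t)^{m(s,t)} = 1, m(s,t) the order of s t in W (whenever finite):
   every map f from S to a group G satisfying these relations extends to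
   a group homomorphism W -> G. *)
Definition coxeter_system : Prop :=
  (forall s, S s -> is_order s 2) /\
  (forall w, exists ws, is_word ws /\ w = word_prod ws) /\
  (forall (G : groupType) (f : W -> G),
     (forall s t n, S s -> S t -> is_order (s * t) n -> (f s * f t) ^+ n = 1) ->
     exists g : W -> G, (forall x y, g (x * y) = g x * g y) /\
                        (forall s, S s -> g s = f s)).

Definition is_length (w : W) (n : nat) : Prop :=
  (exists ws, is_word ws /\ word_prod ws = w /\ size ws = n) /\
  (forall ws, is_word ws -> word_prod ws = w -> n <= size ws).

Definition ell (w : W) : nat := epsilon (inhabits 0%N) (is_length w).

Definition reflection (t : W) : Prop := exists w s, S s /\ t = w * s * w^-1.

Definition DL (w : W) (s : W) : Prop := S s /\ ell (s * w) < ell w.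
Definition DR (w : W) (s : W) : Prop := S s /\ ell (w * s) < ell w.

Definition bruhat_step (x y : W) : Prop :=
  exists t, reflection t /\ y = x * t /\ ell x < ell y.
Definition bruhat_le : W -> W -> Prop := clos_refl_trans W bruhat_step.

Definition interval (u v : W) (x : W) : Prop := bruhat_le u x /\ bruhat_le x v.

Definition gamma_edge (u v : W) (x y : W) : Prop :=
  interval u v x /\ interval u v y /\ exists t, reflection t /\ y = x * t.

End Coxeter.

Definition graph_automorphism (T : Type) (V : T -> Prop) (E : T -> T -> Prop)
  (phi : T -> T) : Prop :=
  (forall x, V x -> V (phi x)) /\
  (forall x y, V x -> V y -> phi x = phi y -> x = y) /\
  (forall y, V y -> exists x, V x /\ phi x = y) /\
  (forall x y, V x -> V y -> (E x y <-> E (phi x) (phi y))).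

(* Exchange condition from the presentation: the elements (s, {s}, 1) of
   W ⋉ (2^W × Z/2), with W acting on subsets of W by conjugation, satisfy the
   Coxeter relations, so they define a homomorphism w ↦ (w, N(w), ℓ(w) mod 2).
   Deleting a letter from a reduced word shows that N(w) is exactly the set of
   reflections t with ℓ(wt) < ℓ(w).  This yields the lifting property of the
   Bruhat order (if sw < w, u < su and u ≤ w, then su ≤ w and u ≤ sw), hence
   x ↦ sx maps [u, v] into itself when s ∈ D_L(v) \ D_L(u).  Being an
   involution that sends the edge {x, xt} to {sx, sxt}, it is a graph
   automorphism; the right-handed case follows by inverting everything. *)

From HB Require Import structures.
From mathcomp Require Import all_boot monoid boolp.
From Stdlib Require Import Relations ClassicalEpsilon.

Set Implicit Arguments.
Unset Strict Implicit.
Unset Printing Implicit Defensive.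

Local Open Scope group_scope.

Section SemidirectProduct.
Variable W : groupType.

Record semidirect := Semidirect { sd_elt : W; sd_set : W -> bool; sd_sign : bool }.

HB.instance Definition _ := gen_eqMixin semidirect.
HB.instance Definition _ := gen_choiceMixin semidirect.

Definition sd_mul (x y : semidirect) : semidirect :=
  Semidirect (sd_elt x * sd_elt y)
    (fun r => sd_set y r (+) sd_set x (sd_elt y * r * (sd_elt y)^-1))
    (sd_sign x (+) sd_sign y).
Definition sd_one : semidirect := Semidirect 1 (fun _ => false) false.
Definition sd_inv (x : semidirect) : semidirect :=
  Semidirect (sd_elt x)^-1 (fun r => sd_set x ((sd_elt x)^-1 * r * sd_elt x))
    (sd_sign x).

Lemma sd_mulA : associative sd_mul.
Proof.
move=> [a f e] [b g e'] [c h e''] /=; congr Semidirect; rewrite ?mulgA ?addbA //.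
by apply: funext => r /=; rewrite invgM !mulgA addbA.
Qed.

Lemma sd_mul1g : left_id sd_one sd_mul.
Proof.
move=> [a f e]; congr Semidirect; rewrite /= ?mul1g //.
by apply: funext => r; rewrite addbF.
Qed.

Lemma sd_mulg1 : right_id sd_one sd_mul.
Proof.
move=> [a f e]; congr Semidirect; rewrite /= ?mulg1 ?addbF //.
by apply: funext => r; rewrite invg1 mulg1 mul1g.
Qed.

Lemma sd_mulVg : left_inverse sd_one sd_inv sd_mul.
Proof.
move=> [a f e]; congr Semidirect; rewrite /= ?mulVg ?addbb //.
by apply: funext => r; rewrite !mulgA mulVg mul1g mulgVK addbb.
Qed.

Lemma sd_mulgV : right_inverse sd_one sd_inv sd_mul.
Proof.
move=> [a f e]; congr Semidirect; rewrite /= ?mulgV ?addbb //.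
by apply: funext => r; rewrite invgK addbb.
Qed.

HB.instance Definition _ :=
  isGroup.Build semidirect sd_mulA sd_mul1g sd_mulg1 sd_mulVg sd_mulgV.

Lemma sd_eltM x y : sd_elt (x * y) = sd_elt x * sd_elt y. Proof. by []. Qed.
Lemma sd_setM x y r :
  sd_set (x * y) r = sd_set y r (+) sd_set x (sd_elt y * r * (sd_elt y)^-1).
Proof. by []. Qed.
Lemma sd_signM x y : sd_sign (x * y) = sd_sign x (+) sd_sign y. Proof. by []. Qed.

Lemma sd_expg_even a f k :
  Semidirect a f false ^+ k =
  Semidirect (a ^+ k)
    (fun r => \big[addb/false]_(0 <= j < k) f (a ^+ j * r * (a ^+ j)^-1)) false.
Proof.
elim: k => [|k IHk].
  by rewrite expg0; congr Semidirect; apply: funext => r; rewrite big_geq.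
rewrite expgS IHk; congr Semidirect; first by rewrite /= -expgS.
by apply: funext => r; rewrite big_nat_recr.
Qed.

End SemidirectProduct.

Lemma conjg_eq (W : groupType) (a r b : W) :
  (a * r * a^-1 == b) = (r == a^-1 * b * a).
Proof.
apply/eqP/eqP => [<-|->]; first by rewrite !mulgA mulVg mul1g mulgVK.
by rewrite !mulgA mulgV mul1g mulgK.
Qed.

Lemma bigxor_pairs (f : nat -> bool) k :
  \big[addb/false]_(0 <= j < k) (f j.*2 (+) f j.*2.+1) =
  \big[addb/false]_(0 <= m < k.*2) f m.
Proof.
elim: k => [|k IHk]; first by rewrite !big_geq.
by rewrite big_nat_recr //= IHk doubleS !big_nat_recr //= addbA.
Qed.

Lemma bigxor_periodic (f : nat -> bool) n :
  (forall m, f (m + n) = f m) -> \big[addb/false]_(0 <= m < n.*2) f m = false.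
Proof.
move=> fn; rewrite -addnn (@big_cat_nat _ _ _ n) ?leq_addr //=.
rewrite -{2}[n]add0n big_addn addnK.
by under [X in _ (+) X]eq_bigr => m _ do rewrite fn; rewrite addbb.
Qed.

Section Coxeter.
Variable W : groupType.
Variable S : W -> Prop.
Hypothesis cox : coxeter_system S.

Lemma gen_mulss s : S s -> s * s = 1.
Proof. by case: cox => ord _ /ord [_ []]. Qed.

Lemma gen_invg s : S s -> s^-1 = s.
Proof. by move/gen_mulss/mulg1_eq. Qed.

Lemma gen_mulKg s x : S s -> s * (s * x) = x.
Proof. by move=> Ss; rewrite mulgA gen_mulss // mul1g. Qed.

Lemma word_prod_cat (ws ws' : seq W) :
  word_prod (ws ++ ws') = word_prod ws * word_prod ws'.
Proof. by elim: ws => [|x ws IH] /=; rewrite ?mul1g // IH mulgA. Qed.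

Lemma is_word_cons x ws : is_word S (x :: ws) <-> S x /\ is_word S ws.
Proof.
split=> [w_xws | [Sx w_ws] y]; last by rewrite inE => /predU1P [-> | /w_ws].
by split=> [|y ys]; apply: w_xws; rewrite inE ?eqxx ?ys ?orbT.
Qed.

Lemma ell_is_length w : is_length S w (ell S w).
Proof.
pose P n := exists ws, is_word S ws /\ word_prod ws = w /\ size ws = n.
have [ws [w_ws ws_w]] : exists ws, is_word S ws /\ w = word_prod ws.
  by case: cox => _ [gen _].
have exP : exists n, `[< P n >] by exists (size ws); apply/asboolP; exists ws.
case: (ex_minnP exP) => n /asboolP Pn n_min.
apply: epsilon_spec; exists n; split=> // ws' w_ws' ws'_w.
by apply: n_min; apply/asboolP; exists ws'.
Qed.

Lemma ell_le_size ws : is_word S ws -> ell S (word_prod ws) <= size ws.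
Proof. by case: (ell_is_length (word_prod ws)) => _ ell_min /ell_min; apply. Qed.

Lemma reduced_word w :
  exists ws, is_word S ws /\ word_prod ws = w /\ size ws = ell S w.
Proof. by case: (ell_is_length w). Qed.

Definition sd_gen (s : W) : semidirect W := Semidirect s (fun r => r == s) true.

Lemma sd_gen_coxeter_rel s t n : S s -> S t -> is_order (s * t) n ->
  (sd_gen s * sd_gen t) ^+ n = 1.
Proof.
move=> Ss St [_ [xn _]]; set x := s * t.
(* The set part of (sd_gen s * sd_gen t) ^+ k is the symmetric difference of
   the singletons {c m}, m < 2k, and c is n-periodic. *)
pose c m := (x ^+ m)^-1 * t.
have tx j : t * x ^+ j = (x ^+ j)^-1 * t.
  elim: j => [|j IHj]; first by rewrite expg0 invg1 mulg1 mul1g.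
  by rewrite {1}expgSr mulgA IHj expgS /x !invgM (gen_invg Ss) (gen_invg St) -!mulgA.
have ts : t * s = x^-1 by rewrite /x invgM (gen_invg Ss) (gen_invg St).
have c_even j : (x ^+ j)^-1 * t * x ^+ j = c j.*2.
  by rewrite /c -addnn expgnDr invgM -mulgA tx mulgA.
have c_odd j : (x ^+ j)^-1 * (t^-1 * s * t) * x ^+ j = c j.*2.+1.
  rewrite (gen_invg St) -!mulgA tx (mulgA t s) ts.
  by rewrite /c -addnn -addnS expgnDr expgS !invgM !mulgA.
have term j r : (x ^+ j * r * (x ^+ j)^-1 == t)
                  (+) (t * (x ^+ j * r * (x ^+ j)^-1) * t^-1 == s)
              = (r == c j.*2) (+) (r == c j.*2.+1).
  by rewrite !conjg_eq c_even c_odd.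
have -> : sd_gen s * sd_gen t =
          Semidirect x (fun r => (r == t) (+) (t * r * t^-1 == s)) false by [].
rewrite sd_expg_even xn; congr Semidirect; apply: funext => r /=.
under eq_bigr => j _ do rewrite term.
rewrite (bigxor_pairs (fun m => r == c m)) bigxor_periodic // => m.
by rewrite /c expgnDr xn mulg1.
Qed.

Lemma sd_lift_ex : exists f : W -> semidirect W,
  (forall x y, f (x * y) = f x * f y) /\ (forall s, S s -> f s = sd_gen s).
Proof. by case: cox => _ [_]; apply=> s t n Ss St; apply: sd_gen_coxeter_rel. Qed.

Definition sd_lift : W -> semidirect W :=
  proj1_sig (constructive_indefinite_description _ sd_lift_ex).

Lemma sd_liftM x y : sd_lift (x * y) = sd_lift x * sd_lift y.
Proof. exact: (proj2_sig (constructive_indefinite_description _ sd_lift_ex)).1. Qed.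

Lemma sd_lift_gen s : S s -> sd_lift s = sd_gen s.
Proof. exact: (proj2_sig (constructive_indefinite_description _ sd_lift_ex)).2. Qed.

Lemma sd_lift1 : sd_lift 1 = 1.
Proof. by apply: (@mulgI _ (sd_lift 1)); rewrite -sd_liftM !mulg1. Qed.

Lemma sd_lift_elt w : sd_elt (sd_lift w) = w.
Proof.
have [ws [w_ws [<- _]]] := reduced_word w.
elim: ws w_ws => [|x ws IH] /=; first by rewrite sd_lift1.
by case/is_word_cons=> Sx w_ws; rewrite sd_liftM sd_eltM IH // sd_lift_gen.
Qed.

Definition inv_set (w : W) : W -> bool := sd_set (sd_lift w).
Definition parity (w : W) : bool := sd_sign (sd_lift w).

Lemma inv_setM x y r : inv_set (x * y) r = inv_set y r (+) inv_set x (y * r * y^-1).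
Proof. by rewrite /inv_set sd_liftM sd_setM sd_lift_elt. Qed.

Lemma parityM x y : parity (x * y) = parity x (+) parity y.
Proof. by rewrite /parity sd_liftM sd_signM. Qed.

Lemma inv_set_gen s r : S s -> inv_set s r = (r == s).
Proof. by move=> Ss; rewrite /inv_set sd_lift_gen. Qed.

Lemma parity_gen s : S s -> parity s.
Proof. by move=> Ss; rewrite /parity sd_lift_gen. Qed.

Lemma inv_set1 r : inv_set 1 r = false.
Proof. by rewrite /inv_set sd_lift1. Qed.

Lemma parity1 : parity 1 = false.
Proof. by rewrite /parity sd_lift1. Qed.

Lemma parityV w : parity w^-1 = parity w.
Proof.
by have := parityM w^-1 w; rewrite mulVg parity1; case: (parity w^-1); case: (parity w).
Qed.

Lemma odd_ell w : odd (ell S w) = parity w.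
Proof.
have [ws [w_ws [<- <-]]] := reduced_word w.
elim: ws w_ws => [|x ws IH] /=; first by rewrite parity1.
by case/is_word_cons=> Sx w_ws; rewrite parityM (parity_gen Sx) IH.
Qed.

Lemma refl_conj a t : reflection S t -> reflection S (a * t * a^-1).
Proof. by case=> w [s [Ss ->]]; exists (a * w), s; rewrite invgM !mulgA. Qed.

Lemma refl_mulss t : reflection S t -> t * t = 1.
Proof.
case=> w [s [Ss ->]].
by rewrite !mulgA mulgVK -(mulgA w) (gen_mulss Ss) mulg1 mulgV.
Qed.

Lemma refl_invg t : reflection S t -> t^-1 = t.
Proof. by move/refl_mulss/mulg1_eq. Qed.

Lemma parity_refl t : reflection S t -> parity t.
Proof.
by case=> w [s [Ss ->]]; rewrite !parityM (parity_gen Ss) parityV; case: (parity w).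
Qed.

Lemma inv_set_refl t : reflection S t -> inv_set t t.
Proof.
case=> w [s [Ss t_def]].
have conj_t : w^-1 * t * w^-1^-1 = s.
  by rewrite t_def invgK !mulgA mulVg mul1g mulgVK.
have := inv_setM w^-1 w s; rewrite mulVg inv_set1 -t_def.
rewrite {2}t_def inv_setM conj_t inv_setM (inv_set_gen _ Ss) eqxx mulgK.
by case: (inv_set w^-1 t); case: (inv_set w s).
Qed.

Lemma ell_mull_gen_le s x : S s -> ell S (s * x) <= (ell S x).+1.
Proof.
move=> Ss; have [ws [w_ws [<- <-]]] := reduced_word x.
by apply: (@ell_le_size (s :: ws)); apply/is_word_cons.
Qed.

Lemma ell_mulr_inv_set ws t : reflection S t -> is_word S ws ->
  inv_set (word_prod ws) t -> ell S (word_prod ws * t) < size ws.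
Proof.
move=> Rt; elim: ws => [|x ws IH] /=; first by rewrite inv_set1.
case/is_word_cons=> Sx w_ws; rewrite inv_setM (inv_set_gen _ Sx).
case: (boolP (inv_set (word_prod ws) t)) => [Nt _ | _ /= /eqP x_def].
  by rewrite -mulgA (leq_ltn_trans (ell_mull_gen_le _ Sx)) // ltnS IH.
by rewrite -x_def mulgVK -mulgA refl_mulss // mulg1 ltnS ell_le_size.
Qed.

Lemma inv_set_ell_lt w t : reflection S t -> inv_set w t -> ell S (w * t) < ell S w.
Proof.
move=> Rt; have [ws [w_ws [<- <-]]] := reduced_word w.
exact: ell_mulr_inv_set.
Qed.

Lemma inv_setE w t : reflection S t -> inv_set w t = (ell S (w * t) < ell S w).
Proof.
move=> Rt; apply/idP/idP => [|lt_wt_w]; first exact: inv_set_ell_lt.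
apply/negPn/negP => /negbTE Nwt.
have : inv_set (w * t) t by rewrite inv_setM inv_set_refl // mulgK Nwt.
move/(inv_set_ell_lt Rt); rewrite -mulgA refl_mulss // mulg1.
by move/(ltn_trans lt_wt_w); rewrite ltnn.
Qed.

Lemma ell_mulr_refl_neq x t : reflection S t -> ell S (x * t) != ell S x.
Proof.
move=> Rt; apply/eqP => /(congr1 odd).
by rewrite !odd_ell parityM (parity_refl Rt); case: (parity x).
Qed.

Lemma ell_mull_gen_neq s x : S s -> ell S (s * x) != ell S x.
Proof.
move=> Ss; apply/eqP => /(congr1 odd).
by rewrite !odd_ell parityM (parity_gen Ss); case: (parity x).
Qed.

Lemma bruhat_le_trans x y z : bruhat_le S x y -> bruhat_le S y z -> bruhat_le S x z.
Proof. exact: rt_trans. Qed.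

Lemma bruhat_step_le x y : bruhat_step S x y -> bruhat_le S x y.
Proof. exact: rt_step. Qed.

Lemma bruhat_step_mull s x : S s -> ell S x < ell S (s * x) ->
  bruhat_step S x (s * x).
Proof.
move=> Ss lt_x_sx; exists (x^-1 * s * x); split; last by rewrite !mulgA mulgV mul1g.
by exists x^-1, s; rewrite invgK.
Qed.

Lemma bruhat_le_mull_lt s x : S s -> ell S (s * x) < ell S x ->
  bruhat_le S (s * x) x.
Proof.
move=> Ss lt_sx_x; apply: bruhat_step_le.
by rewrite -{2}(gen_mulKg x Ss); apply: bruhat_step_mull; rewrite ?gen_mulKg.
Qed.

Lemma ell_mull_gen_lt s x : S s -> ~~ (ell S (s * x) < ell S x) -> ell S x < ell S (s * x).
Proof. by move=> Ss; rewrite -leqNgt ltn_neqAle eq_sym ell_mull_gen_neq. Qed.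

Lemma bruhat_step_mull_cases x t s : reflection S t -> ell S x < ell S (x * t) -> S s ->
  x * t = s * x \/ bruhat_step S (s * x) (s * (x * t)).
Proof.
move=> Rt lt_x_xt Ss.
case: (ltnP (ell S (s * x)) (ell S (s * (x * t)))) => [lt_sx_sxt | le_sxt_sx].
  by right; exists t; rewrite -mulgA.
left; have : inv_set (s * x) t.
  by rewrite inv_setE // ltn_neqAle ell_mulr_refl_neq // -mulgA.
rewrite inv_setM (inv_set_gen _ Ss) inv_setE // ltnNge (ltnW lt_x_xt) /=.
by move=> /eqP <-; rewrite mulgVK.
Qed.

Lemma bruhat_le_mull u w s : bruhat_le S u w -> S s ->
  bruhat_le S (s * u) (s * w) \/ (bruhat_le S (s * u) w /\ bruhat_le S u (s * w)).
Proof.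
move=> le_uw Ss.
elim/clos_refl_trans_ind_right: le_uw => [|x _ [t [Rt [-> lt_x_xt]]] IH le_xt_w].
  by left; apply: rt_refl.
have le_x_xt : bruhat_le S x (x * t) by apply: bruhat_step_le; exists t.
case: (bruhat_step_mull_cases Rt lt_x_xt Ss) => [xt_sx | /bruhat_step_le le_sx_sxt].
  right; split; first by rewrite -xt_sx.
  case: IH => [le_sxt_sw | [_ le_xt_sw]]; last exact: bruhat_le_trans le_x_xt le_xt_sw.
  by rewrite -[x](gen_mulKg x Ss) -xt_sx.
case: IH => [le_sxt_sw | [le_sxt_w le_xt_sw]].
  by left; apply: bruhat_le_trans le_sx_sxt le_sxt_sw.
by right; split; [apply: bruhat_le_trans le_sx_sxt le_sxt_w
                 | apply: bruhat_le_trans le_x_xt le_xt_sw].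
Qed.

Lemma lifting_property u w s : bruhat_le S u w -> S s ->
  ell S (s * w) < ell S w -> ell S u < ell S (s * u) ->
  bruhat_le S (s * u) w /\ bruhat_le S u (s * w).
Proof.
move=> le_uw Ss lt_sw_w lt_u_su.
have le_sw_w := bruhat_le_mull_lt Ss lt_sw_w.
case: (bruhat_le_mull le_uw Ss) => // le_su_sw.
split; first exact: bruhat_le_trans le_su_sw le_sw_w.
exact: bruhat_le_trans (bruhat_step_le (bruhat_step_mull Ss lt_u_su)) le_su_sw.
Qed.

Lemma interval_mull u v s x : DL S v s -> ~ DL S u s ->
  interval S u v x -> interval S u v (s * x).
Proof.
move=> [Ss lt_sv_v] NDu [le_ux le_xv].
have lt_u_su : ell S u < ell S (s * u).
  by apply: ell_mull_gen_lt => //; apply/negP => lt_su_u; apply: NDu.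
case: (ltnP (ell S (s * x)) (ell S x)) => [lt_sx_x | ].
  split; last exact: bruhat_le_trans (bruhat_le_mull_lt Ss lt_sx_x) le_xv.
  by case: (lifting_property le_ux Ss lt_sx_x lt_u_su).
rewrite leqNgt => /(ell_mull_gen_lt Ss) lt_x_sx.
split; first exact: bruhat_le_trans le_ux (bruhat_step_le (bruhat_step_mull Ss lt_x_sx)).
by case: (lifting_property le_xv Ss lt_sv_v lt_x_sx).
Qed.

Lemma rev_word ws : is_word S ws ->
  is_word S (rev ws) /\ word_prod (rev ws) = (word_prod ws)^-1.
Proof.
elim: ws => [_ | x ws IH /is_word_cons [Sx /IH [w_rev prod_rev]]].
  by rewrite invg1; split=> // y; rewrite in_nil.
rewrite rev_cons -cats1.
split; first by move=> y; rewrite mem_cat inE => /orP [/w_rev | /eqP ->].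
by rewrite word_prod_cat prod_rev /= mulg1 invgM (gen_invg Sx).
Qed.

Lemma ellV_le w : ell S w^-1 <= ell S w.
Proof.
have [ws [w_ws [<- <-]]] := reduced_word w.
by have [w_rev <-] := rev_word w_ws; rewrite -(size_rev ws) ell_le_size.
Qed.

Lemma ellV w : ell S w^-1 = ell S w.
Proof. by apply/eqP; rewrite eqn_leq ellV_le -{1}[w]invgK ellV_le. Qed.

Lemma bruhat_stepV x y : bruhat_step S x y -> bruhat_step S x^-1 y^-1.
Proof.
case=> t [Rt [-> lt_x_xt]]; exists (x * t * x^-1); split; first exact: refl_conj.
by rewrite !ellV invgM (refl_invg Rt) !mulgA mulVg mul1g.
Qed.

Lemma bruhat_leV x y : bruhat_le S x y -> bruhat_le S x^-1 y^-1.
Proof.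
elim=> [a b /bruhat_stepV/bruhat_step_le // | a | a b c _ le_ab _ le_bc].
  exact: rt_refl.
exact: bruhat_le_trans le_ab le_bc.
Qed.

Lemma intervalV u v x : interval S u v x -> interval S u^-1 v^-1 x^-1.
Proof. by case=> le_ux le_xv; split; apply: bruhat_leV. Qed.

Lemma DR_DLV w s : DR S w s <-> DL S w^-1 s.
Proof.
rewrite /DR /DL; split=> [] [Ss];
  have sw : s * w^-1 = (w * s)^-1 by rewrite invgM (gen_invg Ss).
all: by rewrite sw !ellV.
Qed.

Lemma interval_mulr u v s x : DR S v s -> ~ DR S u s ->
  interval S u v x -> interval S u v (x * s).
Proof.
move=> /DR_DLV DLv NDRu /intervalV Ix.
have Ss : S s by case: DLv.
have NDLu : ~ DL S u^-1 s by move/DR_DLV.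
by have := intervalV (interval_mull DLv NDLu Ix); rewrite !invgK invgM (gen_invg Ss) invgK.
Qed.

Lemma gamma_edge_mull u v s x y :
  (forall z, interval S u v z -> interval S u v (s * z)) ->
  gamma_edge S u v x y -> gamma_edge S u v (s * x) (s * y).
Proof.
move=> Is [Ix [Iy [t [Rt y_xt]]]]; split; first exact: Is; split; first exact: Is.
by exists t; rewrite y_xt mulgA.
Qed.

Lemma gamma_edge_mulr u v s x y :
  (forall z, interval S u v z -> interval S u v (z * s)) ->
  gamma_edge S u v x y -> gamma_edge S u v (x * s) (y * s).
Proof.
move=> Is [Ix [Iy [t [Rt y_xt]]]]; split; first exact: Is; split; first exact: Is.
exists (s^-1 * t * s^-1^-1); split; first exact: refl_conj.
by rewrite y_xt invgK !mulgA mulgK.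
Qed.

End Coxeter.

Lemma involutive_graph_automorphism (T : Type) (V : T -> Prop) (E : T -> T -> Prop)
    (f : T -> T) :
  involutive f -> (forall x, V x -> V (f x)) -> (forall x y, E x y -> E (f x) (f y)) ->
  graph_automorphism V E f.
Proof.
move=> fK Vf Ef; split=> //; split; first by move=> x y _ _ /(can_inj fK).
split; first by move=> y Vy; exists (f y); rewrite fK; split; first exact: Vf.
by move=> x y _ _; split=> [/Ef // | /Ef]; rewrite !fK.
Qed.

Theorem proposition3p2 (W : groupType) (S : W -> Prop) :
  coxeter_system S ->
  forall u v : W, bruhat_le S u v ->
  (forall s, DL S v s -> ~ DL S u s ->
     (forall x, interval S u v x -> interval S u v (s * x)) /\
     graph_automorphism (interval S u v) (gamma_edge S u v) (fun x => s * x)) /\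
  (forall s, DR S v s -> ~ DR S u s ->
     (forall x, interval S u v x -> interval S u v (x * s)) /\
     graph_automorphism (interval S u v) (gamma_edge S u v) (fun x => x * s)).
Proof.
move=> cox u v _; split=> s Dv NDu; have Ss : S s by case: Dv.
- have Is := interval_mull cox Dv NDu.
  split=> //; apply: involutive_graph_automorphism => //.
    by move=> x; rewrite /= (gen_mulKg cox x Ss).
  by move=> x y; apply: gamma_edge_mull.
- have Is := interval_mulr cox Dv NDu.
  split=> //; apply: involutive_graph_automorphism => //.
    by move=> x; rewrite /= -mulgA (gen_mulss cox Ss) mulg1.
  by move=> x y; apply: gamma_edge_mulr.
Qed.
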